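(* Let $K\ge2$, $p\in(0,1)$, and let $\sigma:[K]\to[K]$ be a bijection different from the identity. Then there exists $m\in[K-1]$ such that $d_S(\sigma)\ge d_S(\hat\sigma_m)$ for all $S\in\mathcal S$.
   Context: Items are $[K]=\{1,\dots,K\}$, $\mathcal S=\{S\subseteq[K]:|S|\ge2\}$. A ranking is a bijection $\sigma:[K]\to[K]$, $\sigma(i)=k$ meaning item $i$ is in position $k$. For $S\in\mathcal S$, $i\in S$, let $\sigma(i\mid S)=1+|\{j\in S:\sigma(j)<\sigma(i)\}|$ and $f^{\mathrm{OA}}_\sigma(i\mid S)=\frac{1-p}{1-p^{|S|}}p^{\sigma(i\mid S)-1}$. Define $d_S(\sigma)=\sum_{i\in S}f^{\mathrm{OA}}_{\mathrm{id}}(i\mid S)\log\frac{f^{\mathrm{OA}}_{\mathrm{id}}(i\mid S)}{f^{\mathrm{OA}}_\sigma(i\mid S)}$, with $\mathrm{id}$ the identity ranking. For $m\in[K-1]$, $\hat\sigma_m$ is the ranking obtained from the identity by swapping the positions of items $m$ and $m+1$: $\hat\sigma_m(m)=m+1$, $\hat\sigma_m(m+1)=m$, $\hat\sigma_m(j)=j$ otherwise. *)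

From mathcomp Require Import all_boot all_order all_algebra all_fingroup.
From mathcomp Require Import all_classical all_reals all_analysis.
Set Implicit Arguments. Unset Strict Implicit. Unset Printing Implicit Defensive.
Import Order.TTheory GRing.Theory Num.Theory.
Local Open Scope ring_scope.

(* Items [K] = {1..K} are represented by 'I_K = {0..K-1} (shift by one);
   a ranking sigma is a permutation of 'I_K, sigma i = position of item i
   (also shifted by one).  Only relative order of positions matters. *)

Definition relpos (K : nat) (sigma : {perm 'I_K}) (S : {set 'I_K}) (i : 'I_K) : nat :=
  (#|[set j in S | (sigma j < sigma i)%N]|).+1.

Definition fOA (R : realType) (p : R) (K : nat) (sigma : {perm 'I_K})
  (S : {set 'I_K}) (i : 'I_K) : R :=
  (1 - p) / (1 - p ^+ #|S|) * p ^+ (relpos sigma S i).-1.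

Definition dS (R : realType) (p : R) (K : nat) (S : {set 'I_K})
  (sigma : {perm 'I_K}) : R :=
  \sum_(i in S) fOA p 1%g S i * ln (fOA p 1%g S i / fOA p sigma S i).

(* hat sigma_m : the identity with the positions of items m and m+1 swapped,
   i.e. the transposition of items m and m+1 (0-indexed: m, m+1 < K). *)
Definition swapAdj (K : nat) (m : nat) : {perm 'I_K} :=
  match ltnP m.+1 K with
  | LtnNotGeq h => tperm (Ordinal (ltnW h)) (Ordinal h)
  | _ => 1%g
  end.

From mathcomp Require Import all_boot all_order all_algebra all_fingroup.
From mathcomp Require Import all_classical all_reals all_analysis.
From mathcomp Require Import ring zify.

Set Implicit Arguments.
Unset Strict Implicit.
Unset Printing Implicit Defensive.
Import Order.TTheory GRing.Theory Num.Theory.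
Local Open Scope ring_scope.

(* Write w_i = f^OA_id(i | S).  Since f^OA_sigma(i | S) is a normalising
   constant times p^(sigma(i | S) - 1), d_S(sigma) equals -ln p times the sum,
   over the pairs i < j of S inverted by sigma, of w_i - w_j; these terms are
   nonnegative because w decreases.  A ranking sigma <> id has an adjacent
   descent sigma(m+1) < sigma(m), and hat sigma_m inverts only the pair
   (m, m+1), which sigma inverts as well. *)

Lemma perm_ord_increasing_id n (s : {perm 'I_n}) :
  (forall i (lt_i1n : (i.+1 < n)%N),
     (s (Ordinal (ltnW lt_i1n)) < s (Ordinal lt_i1n))%N) ->
  s = 1%g.
Proof.
move=> s_incr.
have le_s (i : 'I_n) : (i <= s i)%N.
  case: i => i; elim: i => [//|i IH] lt_i1n.
  by have := s_incr i lt_i1n; have := IH (ltnW lt_i1n); rewrite /=; lia.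
(* [s] permutes the summands, so the excesses [s i - i] add up to zero. *)
have sum_s : (\sum_(i : 'I_n) (s i - i) = 0)%N.
  rewrite sumnB; last by move=> i _; exact: le_s.
  by rewrite [X in (_ - X)%N](reindex_inj (@perm_inj _ s)) subnn.
apply/permP => i; apply/val_inj/eqP; rewrite perm1 eqn_leq le_s andbT -subn_eq0.
by move/eqP: sum_s; rewrite sum_nat_eq0 => /forallP/(_ i)/eqP ->.
Qed.

Lemma exists_adjacent_descent n (s : {perm 'I_n}) : s != 1%g ->
  exists m (lt_m1n : (m.+1 < n)%N),
    (s (Ordinal lt_m1n) < s (Ordinal (ltnW lt_m1n)))%N.
Proof.
move=> /eqP s_ne1; apply: contrapT => no_descent; apply: s_ne1.
apply: perm_ord_increasing_id => i lt_i1n; rewrite ltnNge leq_eqVlt negb_or.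
apply/andP; split; last by apply/negP => desc; apply: no_descent; exists i, lt_i1n.
by apply/eqP => /val_inj/perm_inj/(congr1 val)/esym/n_Sn.
Qed.

Lemma swapAdjE K m (lt_m1K : (m.+1 < K)%N) (x : 'I_K) :
  nat_of_ord (swapAdj K m x) =
  if nat_of_ord x == m then m.+1 else if nat_of_ord x == m.+1 then m else x.
Proof.
rewrite /swapAdj; case: ltnP => [?|]; last by rewrite leqNgt lt_m1K.
case: tpermP => [->|->|ne_m ne_m1] /=; rewrite ?eqxx //.
  by rewrite eqn_leq ltnn.
have /negbTE-> : nat_of_ord x != m by apply/eqP => eq_m; apply: ne_m; exact: val_inj.
by have /negbTE-> : nat_of_ord x != m.+1 by apply/eqP => eq_m1; apply: ne_m1; exact: val_inj.
Qed.

Lemma swapAdj_inversion K m (lt_m1K : (m.+1 < K)%N) (i j : 'I_K) :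
  (i < j)%N -> (swapAdj K m j < swapAdj K m i)%N ->
  nat_of_ord i = m /\ nat_of_ord j = m.+1.
Proof.
move=> ij; rewrite !swapAdjE // => lt_swap.
by move: lt_swap ij; repeat case: eqP => ?; lia.
Qed.

Lemma natr_card_sum (R : pzSemiRingType) (T : finType) (S : {set T}) (P : pred T) :
  (#|[set j in S | P j]|)%:R = \sum_(j in S) (P j)%:R :> R.
Proof.
rewrite -sum1_card natr_sum (eq_bigl (fun j => (j \in S) && P j)); last first.
  by move=> j; rewrite inE.
by rewrite big_mkcondr; apply: eq_bigr => j _; case: (P j).
Qed.

Section InversionSum.
Variables (R : numDomainType) (n : nat) (S : {set 'I_n}) (w : 'I_n -> R).

Definition inversion_sum (s : {perm 'I_n}) : R :=
  \sum_(i in S) \sum_(j in S)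
    (if (i < j)%N && (s j < s i)%N then w i - w j else 0).

Lemma rank_indicator_diff (s : {perm 'I_n}) (i j : 'I_n) :
  w i * ((s j < s i)%N%:R - (j < i)%N%:R) =
  (if (i < j)%N && (s j < s i)%N then w i else 0) -
  (if (j < i)%N && (s i < s j)%N then w i else 0).
Proof.
case: (eqVneq (nat_of_ord i) j) => [/val_inj ->|ne_ij].
  by rewrite !ltnn /= subrr mulr0.
have ne_s : nat_of_ord (s j) != s i by apply: contra ne_ij => /eqP/val_inj/perm_inj ->.
case: ltngtP => [_|_|eq_ij]; case: ltngtP => [_|_|eq_s];
  rewrite /= ?(subr0, sub0r, subrr, mulr1, mulr0, mulrN1) //; lia.
Qed.

Lemma inversion_sumE (s : {perm 'I_n}) :
  \sum_(i in S) w i *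
    ((#|[set j in S | (s j < s i)%N]|)%:R - (#|[set j in S | (j < i)%N]|)%:R)
  = inversion_sum s.
Proof.
rewrite /inversion_sum.
have split_if (i j : 'I_n) (b : bool) :
    (if b then w i - w j else 0) = (if b then w i else 0) - (if b then w j else 0).
  by case: b; rewrite ?subr0.
under [RHS]eq_bigr do under eq_bigr do rewrite split_if.
rewrite (eq_bigr (fun i => \sum_(j in S) w i * ((s j < s i)%N%:R - (j < i)%N%:R))); last first.
  by move=> i _; rewrite !natr_card_sum -sumrB mulr_sumr.
under eq_bigr do under eq_bigr do rewrite rank_indicator_diff.
under eq_bigr do rewrite sumrB.
under [RHS]eq_bigr do rewrite sumrB.
by rewrite !sumrB [X in _ - X]exchange_big.
Qed.

Lemma inversion_sum_swapAdj_le (s : {perm 'I_n}) m (lt_m1n : (m.+1 < n)%N) :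
  {in S &, forall i j : 'I_n, (i < j)%N -> w j <= w i} ->
  (s (Ordinal lt_m1n) < s (Ordinal (ltnW lt_m1n)))%N ->
  inversion_sum (swapAdj n m) <= inversion_sum s.
Proof.
move=> w_anti desc; apply: ler_sum => i iS; apply: ler_sum => j jS.
case: ifP => [/andP[ij /(swapAdj_inversion lt_m1n ij) [ei ej]]|_].
  have -> : i = Ordinal (ltnW lt_m1n) by apply: val_inj.
  have -> : j = Ordinal lt_m1n by apply: val_inj.
  by rewrite /= ltnSn desc.
by case: ifP => // /andP[ij _]; rewrite subr_ge0 w_anti.
Qed.

End InversionSum.

Section OrderAgreement.
Variables (R : realType) (K : nat) (p : R) (S : {set 'I_K}).
Hypotheses (p_gt0 : 0 < p) (p_lt1 : p < 1) (S_ge2 : (2 <= #|S|)%N).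

Lemma relpos_id (i : 'I_K) : relpos 1%g S i = #|[set j in S | (j < i)%N]|.+1.
Proof. by congr _.+1; apply: eq_card => j; rewrite !inE !perm1. Qed.

Lemma fOA_norm_gt0 : 0 < (1 - p) / (1 - p ^+ #|S|).
Proof.
rewrite divr_gt0 // subr_gt0 // exprn_ilt1 ?ltW //.
by rewrite -lt0n (leq_trans _ S_ge2).
Qed.

Lemma fOA_id_antimono : {in S &, forall i j : 'I_K,
  (i < j)%N -> fOA p 1%g S j <= fOA p 1%g S i}.
Proof.
move=> i j _ _ ij; rewrite /fOA !relpos_id /=.
rewrite ler_wpM2l ?(ltW fOA_norm_gt0) // ler_wiXn2l ?(ltW p_gt0) ?(ltW p_lt1) //.
apply: subset_leq_card; apply/fintype.subsetP => k; rewrite !inE => /andP[-> ki] /=.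
exact: ltn_trans ki ij.
Qed.

Lemma ln_fOA_ratio (s : {perm 'I_K}) (i : 'I_K) :
  ln (fOA p 1%g S i / fOA p s S i) =
  - ln p * ((#|[set j in S | (s j < s i)%N]|)%:R - (#|[set j in S | (j < i)%N]|)%:R).
Proof.
rewrite /fOA relpos_id /= invfM mulrACA divff ?mul1r;
  last exact: lt0r_neq0 fOA_norm_gt0.
rewrite ln_div ?posrE ?exprn_gt0 // !lnXn //; ring.
Qed.

Lemma dS_inversion_sum (s : {perm 'I_K}) :
  dS p S s = - ln p * inversion_sum S (fOA p 1%g S) s.
Proof.
rewrite -inversion_sumE mulr_sumr; apply: eq_bigr => i _.
by rewrite ln_fOA_ratio mulrCA.
Qed.

End OrderAgreement.

Theorem mainTheorem10 (R : realType) (K : nat) (p : R) (sigma : {perm 'I_K}) :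
  (2 <= K)%N -> 0 < p < 1 -> sigma != 1%g ->
  exists2 m : nat, (m.+1 < K)%N &
    forall S : {set 'I_K}, (2 <= #|S|)%N ->
      dS p S (swapAdj K m) <= dS p S sigma.
Proof.
move=> _ /andP[p_gt0 p_lt1] sigma_ne1.
have [m [lt_m1K desc]] := exists_adjacent_descent sigma_ne1.
exists m => // S S_ge2.
rewrite !(dS_inversion_sum p_gt0 p_lt1 S_ge2).
apply: ler_wpM2l; first by rewrite oppr_ge0 ln_le0 // ltW.
apply: inversion_sum_swapAdj_le desc.
exact: fOA_id_antimono.
Qed.
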